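(* The radical $\sqrt{\nabla}$ of a finite irreducible undirected graph $\nabla$ (loops allowed) is itself an irreducible graph.
   Context: $\nabla(x)$ is the set of vertices adjacent to $x$, $\nabla(X)=\bigcap_{x\in X}\nabla(x)$ (with $\nabla(\emptyset)=V$), and $\mathbb{L}(\nabla)=\{X\subseteq V:\nabla(\nabla(X))=X\}$ ordered by inclusion. A graph is irreducible if distinct vertices have distinct neighborhoods. An element $a$ of a lattice is (completely) meet-irreducible if $a=\bigwedge A$ for a subset $A$ implies $a\in A$; a vertex $x$ is essential if $\nabla(x)$ is meet-irreducible in $\mathbb{L}(\nabla)$. The radical $\sqrt{\nabla}$ is the induced subgraph of $\nabla$ on the set of its essential vertices (adjacency inherited from $\nabla$). *)

From mathcomp Require Import all_boot.
Set Implicit Arguments. Unset Strict Implicit. Unset Printing Implicit Defensive.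

(* A finite undirected graph (loops allowed) on vertex set T:
   a symmetric relation e : rel T (no irreflexivity assumed). *)
Definition undirected (T : finType) (e : rel T) : Prop := symmetric e.

Section Nabla.
Variables (T : finType) (e : rel T).

Definition nbhd (x : T) : {set T} := [set y | e x y].

(* nabla(X) = intersection of nabla(x), x in X; nabla(emptyset) = V *)
Definition nablaS (X : {set T}) : {set T} := [set y | [forall x in X, e x y]].

(* L(nabla): the closed sets, ordered by inclusion *)
Definition closedS (X : {set T}) : bool := nablaS (nablaS X) == X.

Definition is_meet (A : {set {set T}}) (a : {set T}) : bool :=
  [&& closedS a,
      [forall b in A, a \subset b] &
      [forall c : {set T}, closedS c ==>
          ([forall b in A, c \subset b] ==> (c \subset a))]].

(* (completely) meet-irreducible element of L(nabla):
   a = /\ A for a subset A of L(nabla) implies a \in A *)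
Definition meet_irreducible (a : {set T}) : bool :=
  closedS a &&
  [forall A : {set {set T}}, [forall b in A, closedS b] ==>
     is_meet A a ==> (a \in A)].

Definition essential (x : T) : bool := meet_irreducible (nbhd x).

(* the set of essential vertices (vertex set of the radical) *)
Definition essentials : {set T} := [set x | essential x].

End Nabla.

Definition irreducible_on (T : finType) (e : rel T) (S : {set T}) : Prop :=
  forall x y, x \in S -> y \in S -> x != y ->
    nbhd e x :&: S != nbhd e y :&: S.

Definition irreducible_graph (T : finType) (e : rel T) : Prop :=
  irreducible_on e [set: T].

Definition radical_irreducible (T : finType) (e : rel T) : Prop :=
  irreducible_on e (essentials e).

(* The map X |-> nabla(nabla(X)) is a closure operator whose closed sets form
   the finite lattice L(nabla).  In a finite lattice every element is the meet
   of the meet-irreducibles above it, and every meet-irreducible closed set m is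
   the meet of the neighbourhoods nabla(y), y in nabla(m), hence is itself the
   neighbourhood of an essential vertex.  Consequently u is adjacent to v iff u
   lies in every essential neighbourhood containing nabla(v), i.e. iff every
   essential z with nabla(v) included in nabla(z) is adjacent to u.  So the
   neighbourhood of any vertex is determined by its essential neighbours, and
   irreducibility of the graph passes to the radical. *)

From mathcomp Require Import all_boot.

Section Radical.
Variables (T : finType) (e : rel T).
Hypothesis e_sym : symmetric e.

Lemma mem_nbhdC x y : (x \in nbhd e y) = (y \in nbhd e x).
Proof. by rewrite !inE e_sym. Qed.

Lemma subset_nablaS (X Y : {set T}) : X \subset Y -> nablaS e Y \subset nablaS e X.
Proof.
move=> sXY; apply/subsetP=> y; rewrite !inE => /forall_inP eYy.
by apply/forall_inP=> x Xx; apply: eYy; apply: (subsetP sXY).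
Qed.

Lemma subset_nablaS2 (X : {set T}) : X \subset nablaS e (nablaS e X).
Proof.
apply/subsetP=> w Xw; rewrite inE; apply/forall_inP=> y.
by rewrite inE => /forall_inP eXy; rewrite e_sym; apply: eXy.
Qed.

Lemma closedS_nablaS (X : {set T}) : closedS e (nablaS e X).
Proof.
apply/eqP/eqP; rewrite eqEsubset subset_nablaS2 andbT.
exact: subset_nablaS (subset_nablaS2 X).
Qed.

Lemma closedS_nbhd x : closedS e (nbhd e x).
Proof.
have -> : nbhd e x = nablaS e [set x].
  apply/setP=> y; rewrite !inE.
  by apply/idP/forall_inP=> [exy _ /set1P-> | ]; last apply; rewrite ?set11.
exact: closedS_nablaS.
Qed.

Lemma nablaS2_min (X b : {set T}) :
  X \subset b -> closedS e b -> nablaS e (nablaS e X) \subset b.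
Proof. by move=> sXb /eqP <-; apply/subset_nablaS/subset_nablaS. Qed.

Lemma is_meet_nbhd (c : {set T}) :
  closedS e c -> is_meet e [set nbhd e y | y in nablaS e c] c.
Proof.
move=> cc; apply/and3P; split=> //.
  apply/forall_inP=> _ /imsetP[y + ->]; rewrite inE => /forall_inP eCy.
  by apply/subsetP=> w cw; rewrite inE e_sym eCy.
apply/forallP=> d; apply/implyP=> _; apply/implyP=> /forall_inP sdA.
move/eqP: cc => <-; apply/subsetP=> w dw; rewrite inE; apply/forall_inP=> y cy.
have /subsetP/(_ w dw) := sdA (nbhd e y) (imset_f _ cy).
by rewrite inE.
Qed.

Lemma meet_irreducible_nbhd (m : {set T}) :
  meet_irreducible e m -> exists2 z, z \in essentials e & m = nbhd e z.
Proof.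
move=> irr_m; have /andP[cm /forallP/(_ [set nbhd e y | y in nablaS e m])] := irr_m.
have -> : [forall b in [set nbhd e y | y in nablaS e m], closedS e b].
  by apply/forall_inP=> _ /imsetP[y _ ->]; apply: closedS_nbhd.
rewrite is_meet_nbhd // => /imsetP[z _ mz].
by exists z; rewrite // inE /essential -mz.
Qed.

(* A closed set avoiding v, maximal among those containing c, is
   meet-irreducible: any closed set strictly above it contains v, hence so
   does the meet of such sets. *)
Lemma meet_irreducible_sep (c : {set T}) v :
  closedS e c -> v \notin c ->
  exists2 m, meet_irreducible e m & (c \subset m) && (v \notin m).
Proof.
move=> cc vNc.
pose P m := [&& closedS e m, c \subset m & v \notin m].
have Pc : P c by rewrite /P cc subxx.
case: (arg_maxnP (fun m : {set T} => #|m|) Pc) => m /and3P[cm scm vNm] max_m.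
exists m; last by rewrite scm.
rewrite /meet_irreducible cm; apply/forallP=> A; apply/implyP=> /forall_inP cA.
apply/implyP=> /and3P[_ /forall_inP smA /forallP m_greatest].
apply: contraT => mNA.
have vA b : b \in A -> v \in b.
  move=> bA; apply: contraT => vNb.
  have /max_m : P b by rewrite /P cA // vNb (subset_trans scm (smA b bA)).
  have mb : m \proper b.
    by rewrite properEneq smA // andbT; apply: contraNneq mNA => ->.
  by rewrite /= leqNgt proper_card.
have sub_m : nablaS e (nablaS e (v |: m)) \subset m.
  apply: (implyP (implyP (m_greatest _) (closedS_nablaS _))).
  apply/forall_inP=> b bA; apply: nablaS2_min; last exact: cA.
  by rewrite subUset sub1set vA // smA.
by rewrite (subsetP sub_m) // (subsetP (subset_nablaS2 _)) ?setU11 in vNm.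
Qed.

Lemma nbhd_essential_sep u v : u \notin nbhd e v ->
  exists2 z, z \in essentials e & (nbhd e v \subset nbhd e z) && (u \notin nbhd e z).
Proof.
case/(@meet_irreducible_sep _ _ (closedS_nbhd v)) => m /meet_irreducible_nbhd[z zE ->].
by exists z.
Qed.

Lemma nbhd_sub_essentials x y :
  nbhd e x :&: essentials e \subset nbhd e y -> nbhd e x \subset nbhd e y.
Proof.
move=> sxy; apply/subsetP=> v; rewrite mem_nbhdC [v \in _]mem_nbhdC => xv.
apply: contraT => /nbhd_essential_sep[z zE /andP[svz yNz]].
have /(subsetP sxy) : z \in nbhd e x :&: essentials e.
  by rewrite inE zE andbT mem_nbhdC (subsetP svz).
by rewrite mem_nbhdC (negbTE yNz).
Qed.

End Radical.

Theorem mainTheorem16 (T : finType) (e : rel T) :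
  undirected e -> irreducible_graph e -> radical_irreducible e.
Proof.
move=> e_sym irr x y _ _; apply: contraNneq => Nxy.
have nbhd_xy : nbhd e x = nbhd e y.
  apply/eqP; rewrite eqEsubset !nbhd_sub_essentials //.
    by rewrite -Nxy; apply: subsetIl.
  by rewrite Nxy; apply: subsetIl.
apply: contraT => /(irr x y (in_setT x) (in_setT y)).
by rewrite !setIT nbhd_xy eqxx.
Qed.
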